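(* Let $q'>0$, $e'\in(0,1)$, $q_{\max}>0$. There is no $(q,e)\in\mathcal D_4$ such that the orbits are linked for every $(\omega,\omega')\in\mathcal D_3$.
   Context: For $q>0$, $e\in[0,1]$ and angles $\omega,\omega'$, define $r_{\pm}=\frac{q(1+e)}{1\pm e\cos\omega}$, $r'_{\pm}=\frac{q'(1+e')}{1\pm e'\cos\omega'}$ (extended-real values allowed), $d^+=r'_+-r_+$, $d^-=r'_--r_-$. Linked orbits: $d^+d^-<0$. $\mathcal D_3=\{(\omega,\omega'):0\le\omega\le\pi/2,\ 0\le\omega'\le\pi\}$, $\mathcal D_4=\{(q,e):0<q\le q_{\max},\ 0\le e\le1\}$. *)

From Stdlib Require Import Reals Lra.
Open Scope R_scope.

Inductive ER : Type := Fin (x : R) | PInf.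

(* r = q(1+e)/den, with the convention that a zero denominator gives +oo
   (for q>0, e in [0,1] the numerator is positive and den >= 0). *)
Definition rdiv_ext (num den : R) : ER :=
  if Req_EM_T den 0 then PInf else Fin (num / den).

Definition r_plus (q e w : R) : ER := rdiv_ext (q * (1 + e)) (1 + e * cos w).
Definition r_minus (q e w : R) : ER := rdiv_ext (q * (1 + e)) (1 - e * cos w).

Definition diff_pos (a b : ER) : Prop :=
  match a, b with
  | Fin x, Fin y => x - y > 0
  | PInf, Fin _ => True
  | _, _ => False   (* b = +oo gives -oo; +oo - +oo undefined *)
  end.
Definition diff_neg (a b : ER) : Prop :=
  match a, b with
  | Fin x, Fin y => x - y < 0
  | Fin _, PInf => True
  | _, _ => False
  end.

(* d^+ = r'_+ - r_+ , d^- = r'_- - r_- ; linked iff d^+ d^- < 0,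
   i.e. the two differences have strictly opposite signs. *)
Definition linked (q e w q' e' w' : R) : Prop :=
  let dp := (r_plus q' e' w', r_plus q e w) in
  let dm := (r_minus q' e' w', r_minus q e w) in
  (diff_pos (fst dp) (snd dp) /\ diff_neg (fst dm) (snd dm)) \/
  (diff_neg (fst dp) (snd dp) /\ diff_pos (fst dm) (snd dm)).

Definition in_D3 (w w' : R) : Prop := 0 <= w <= PI / 2 /\ 0 <= w' <= PI.
Definition in_D4 (qmax q e : R) : Prop := 0 < q <= qmax /\ 0 <= e <= 1.

(* At w = w' = PI/2 both cosines vanish, so each orbit has r_+ = r_-.
   Then d^+ = d^- and d^+ d^- < 0 is impossible. *)
From Stdlib Require Import Reals Lra.
Open Scope R_scope.

Lemma r_plus_eq_r_minus (q e w : R) : cos w = 0 -> r_plus q e w = r_minus q e w.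
Proof.
  intros Hcos; unfold r_plus, r_minus; rewrite Hcos.
  f_equal; ring.
Qed.

Lemma diff_pos_neg_excl (a b : ER) : diff_pos a b -> diff_neg a b -> False.
Proof. destruct a, b; simpl; lra. Qed.

Lemma not_linked_cos0 (q e w q' e' w' : R) :
  cos w = 0 -> cos w' = 0 -> ~ linked q e w q' e' w'.
Proof.
  intros Hw Hw'; unfold linked; simpl.
  rewrite (r_plus_eq_r_minus q e w Hw), (r_plus_eq_r_minus q' e' w' Hw').
  intros [[Hp Hn] | [Hn Hp]]; exact (diff_pos_neg_excl _ _ Hp Hn).
Qed.

Lemma in_D3_PI2 : in_D3 (PI / 2) (PI / 2).
Proof. pose proof PI_RGT_0; unfold in_D3; lra. Qed.

Theorem mainTheorem12 (q' e' qmax : R) :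
  0 < q' -> 0 < e' < 1 -> 0 < qmax ->
  ~ (exists q e, in_D4 qmax q e /\
       forall w w', in_D3 w w' -> linked q e w q' e' w').
Proof.
  intros _ _ _ [q [e [_ Hlinked]]].
  exact (not_linked_cos0 q e _ q' e' _ cos_PI2 cos_PI2 (Hlinked _ _ in_D3_PI2)).
Qed.
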